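(* Let $\alpha\ge1$. If $P_1,P_2\in\hat E_+$ satisfy the condition $A_\alpha$ for orders $(k_1,l_1)$ and $(k_2,l_2)$ respectively, then $P_1P_2$ satisfies $A_\alpha$ for order $(k_1+k_2,l_1+l_2)$. In particular, if $P_1,P_2$ satisfy $A_\alpha$, then $P_1P_2$ satisfies $A_\alpha$ and $\mathrm{ord}_\Gamma(P_1P_2)=\mathrm{ord}_\Gamma(P_1)+\mathrm{ord}_\Gamma(P_2)$. The same statements hold for $P_1,P_2\in E_+$ with the strong condition $B_\alpha$ in place of $A_\alpha$.
   Context: $k$ is a field of characteristic zero, $R=k[[x_1,x_2]]$, $M=(x_1,x_2)$, $\mathrm{ord}_M(a)=\sup\{n:a\in M^n\}$, $\partial_i=\partial/\partial x_i$. $\hat D_1$: formal series $\sum_{q\ge0}a_q\partial_1^q$, $a_q\in R$, $\mathrm{ord}_M(a_q)\to\infty$; $\hat E_+=\hat D_1((\partial_2^{-1}))$ (Laurent series in $\partial_2^{-1}$, coefficients on the left, Leibniz-rule multiplication); $E_+=R[\partial_1]((\partial_2^{-1}))$. Every $P\in\hat E_+$ is uniquely $P=\sum p_{ij}\partial_1^i\partial_2^j$, $p_{ij}\in R$. $P$ has $\Gamma$-order $\mathrm{ord}_\Gamma(P)=(k,l)$ if $P=\sum_{s\le l}p_s\partial_2^s$ with $p_s\in\hat D_1$, $p_l\in R[\partial_1]$ of $\partial_1$-order $k$. $P$ satisfies $A_\alpha$ for order $(k,l)$ if $\mathrm{ord}_M(p_{ij})\ge i-\alpha(l-j)-k$ whenever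 $i>\alpha(l-j)+k$; $P$ satisfies $A_\alpha$ if it does so for $(k,l)=\mathrm{ord}_\Gamma(P)$. $P\in E_+$ satisfies the strong condition $B_\alpha$ for order $(k,l)$ if $p_{ij}=0$ whenever $i>\alpha(l-j)+k$, and $B_\alpha$ if this holds for $(k,l)=\mathrm{ord}_\Gamma(P)$. *)

From Stdlib Require Import Reals ClassicalEpsilon.
From HB Require Import structures.
From mathcomp Require Import all_boot all_order all_algebra.
Set Implicit Arguments. Unset Strict Implicit. Unset Printing Implicit Defensive.
Import GRing.Theory.
Local Open Scope ring_scope.

Section Defs.
Variable K : fieldType.

(* R = K[[x1,x2]] : c a b = coefficient of x1^a x2^b. *)
Definition PS := nat -> nat -> K.
Definition zeroPS (c : PS) : Prop := forall a b, c a b = 0.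

(* ord_M(c) >= x  (x real):  c in M^n for every integer n < x, i.e. every
   monomial of total degree d < x has coefficient 0. *)
Definition ordM_ge (c : PS) (x : R) : Prop :=
  forall a b : nat, Rlt (INR (a + b)%N) x -> c a b = 0.

(* An operator P = sum_{i in N, j in Z} p i j d1^i d2^j, p i j in R. *)
Definition Op := nat -> int -> PS.

(* membership in \hat E_+ = \hat D_1((d2^-1)) *)
Definition inEhat (p : Op) : Prop :=
  (exists L : int, forall i j, L < j -> zeroPS (p i j)) /\
  (forall (j : int) (d : nat), exists N : nat, forall i, (N <= i)%N ->
      forall a b : nat, (a + b < d)%N -> p i j a b = 0).

(* membership in E_+ = R[d1]((d2^-1)) *)
Definition inEplus (p : Op) : Prop :=
  (exists L : int, forall i j, L < j -> zeroPS (p i j)) /\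
  (forall j : int, exists N : nat, forall i, (N <= i)%N -> zeroPS (p i j)).

(* Sum of a finitely supported family indexed by nat (0 if not finitely
   supported; only used on finitely supported families). *)
Definition fsum (f : nat -> K) : K :=
  match excluded_middle_informative
          (exists N : nat, forall n, (N <= n)%N -> f n = 0) with
  | left H => \sum_(n < proj1_sig (constructive_indefinite_description _ H)) f n
  | right _ => 0
  end.

Definition fsumZ (f : int -> K) : K :=
  fsum (fun n => f (Posz n)) + fsum (fun n => f (Negz n)).

(* generalized binomial coefficient binom(j, t), j in Z (char 0) *)
Definition gbin (j : int) (t : nat) : K :=
  (\prod_(u < t) (j%:~R - u%:R)) / (t`!)%:R.

(* d1^s d2^t applied to a power series c *)
Definition dpart (s t : nat) (c : PS) : PS :=
  fun a b => c (a + s)%N (b + t)%N * ((a + s) ^_ s)%:R * ((b + t) ^_ t)%:R.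

(* Product in \hat E_+ via the Leibniz rule:
   (p1 d1^i d2^j)(p2 d1^i' d2^j') =
     sum_{s<=i, t>=0} C(i,s) C(j,t) p1 (d1^s d2^t p2) d1^(i-s+i') d2^(j-t+j').
   Coefficient of d1^I d2^J, at monomial x1^a x2^b. *)
Definition opmul (p1 p2 : Op) : Op :=
  fun I J a b =>
    fsumZ (fun j => fsum (fun t => fsum (fun i =>
      \sum_(s < i.+1 | (i - s <= I)%N)
        \sum_(a1 < a.+1) \sum_(b1 < b.+1)
          p1 i j a1 b1 * ('C(i, s))%:R * gbin j t *
          dpart s t (p2 (I - (i - s))%N (J - j + t%:Z)) (a - a1)%N (b - b1)%N))).

Definition intR (z : int) : R :=
  match z with Posz n => INR n | Negz n => Ropp (INR n.+1) end.

Definition ordG (p : Op) (k : nat) (l : int) : Prop :=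
  (forall i j, l < j -> zeroPS (p i j)) /\
  (forall i, (k < i)%N -> zeroPS (p i l)) /\
  ~ zeroPS (p k l).

Definition condA (al : R) (p : Op) (k : nat) (l : int) : Prop :=
  forall (i : nat) (j : int),
    Rlt (Rplus (Rmult al (intR (l - j))) (INR k)) (INR i) ->
    ordM_ge (p i j) (Rminus (Rminus (INR i) (Rmult al (intR (l - j)))) (INR k)).

Definition condB (al : R) (p : Op) (k : nat) (l : int) : Prop :=
  forall (i : nat) (j : int),
    Rlt (Rplus (Rmult al (intR (l - j))) (INR k)) (INR i) -> zeroPS (p i j).

End Defs.

From Stdlib Require Import Reals Lra Classical ClassicalEpsilon.
From mathcomp Require Import all_boot all_order all_algebra zify ssrZ.
Set Implicit Arguments. Unset Strict Implicit. Unset Printing Implicit Defensive.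
Import Order.TTheory GRing.Theory Num.Theory.
Local Open Scope ring_scope.

(* A nonzero coefficient of P1 P2 at x^(a,b) d1^I d2^J comes from a Leibniz
   term  p1(i,j) * d1^s d2^t p2(I-(i-s), J-j+t)  (lemma [opmul_support]).
   Both conditions say that every monomial x^(a,b) d1^i d2^j in the support of
   P satisfies  i <= alpha (l - j) + k + wt(a+b), with wt(d) = d for A_alpha
   and wt = 0 for B_alpha ([condA_support], [condB_support]).  Adding the two
   bounds of a Leibniz term, the s derivatives in x1 and t in x2 are paid for
   by the weight, and the shift of the d2-exponent by t is absorbed because
   alpha >= 1 ([leibniz_bound], [support_bound_mul]).
   For ord_Gamma, the same support description shows that the only Leibniz
   term reaching d1^(k1+k2) d2^(l1+l2) is the product of the two leading
   coefficients ([opmul_lead]), which is nonzero since K[[x1,x2]] is an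
   integral domain ([psmul_neq0], via lexicographically least monomials). *)

Lemma ex_minimal (P : nat -> Prop) :
  (exists n, P n) -> exists n, P n /\ forall m, (m < n)%N -> ~ P m.
Proof.
move=> [n Pn]; elim/ltn_ind: n Pn => n IH Pn.
case: (classic (exists m, (m < n)%N /\ P m)) => [[m [ltmn Pm]]|none].
  exact: IH ltmn Pm.
by exists n; split => // m ltmn Pm; apply: none; exists m.
Qed.

Section FiniteSums.
Variable K : fieldType.

Lemma fsum_eq0 (f : nat -> K) : (forall n, f n = 0) -> fsum f = 0.
Proof.
move=> f0; rewrite /fsum; case: excluded_middle_informative => // fin.
by apply: big1 => n _; apply: f0.
Qed.

Lemma fsum_single (f : nat -> K) (n0 : nat) :
  (forall n, n <> n0 -> f n = 0) -> fsum f = f n0.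
Proof.
move=> f0; rewrite /fsum; case: excluded_middle_informative => [fin|]; last first.
  by case; exists n0.+1 => n ltn0n; apply: f0; lia.
case: (constructive_indefinite_description _ fin) => N fN /=.
case: (ltnP n0 N) => [ltn0N|leNn0]; last first.
  by rewrite (fN _ leNn0) big1 // => n _; case: (eqVneq (val n) n0) => [->|/eqP]; auto.
rewrite (bigD1 (Ordinal ltn0N)) //= big1 ?addr0 // => n ne; apply: f0 => en.
by move: ne; rewrite -(inj_eq val_inj) /= en eqxx.
Qed.

Lemma fsumZ_eq0 (f : int -> K) : (forall z, f z = 0) -> fsumZ f = 0.
Proof. by move=> f0; rewrite /fsumZ !fsum_eq0 ?addr0. Qed.

Lemma fsumZ_single (f : int -> K) (z0 : int) :
  (forall z, z <> z0 -> f z = 0) -> fsumZ f = f z0.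
Proof.
move=> f0; rewrite /fsumZ; case: z0 f0 => n0 f0.
  rewrite (fsum_single (n0 := n0)) => [|n ne]; last by apply: f0 => -[/ne].
  by rewrite fsum_eq0 ?addr0 // => n; apply: f0.
rewrite (fsum_single (n0 := n0) (f := fun n => f (Negz n))) => [|n ne]; last first.
  by apply: f0 => -[/ne].
by rewrite fsum_eq0 ?add0r // => n; apply: f0.
Qed.
End FiniteSums.

Section LeibnizProduct.
Variable K : fieldType.

Definition leibniz_term (p1 p2 : Op K) (I : nat) (J : int) (a b : nat)
    (j : int) (t i s a1 b1 : nat) : K :=
  p1 i j a1 b1 * ('C(i, s))%:R * gbin K j t *
  dpart s t (p2 (I - (i - s))%N (J - j + t%:Z)) (a - a1)%N (b - b1)%N.

Lemma opmulE (p1 p2 : Op K) I J a b :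
  opmul p1 p2 I J a b =
  fsumZ (fun j => fsum (fun t => fsum (fun i =>
    \sum_(s < i.+1 | (i - s <= I)%N) \sum_(a1 < a.+1) \sum_(b1 < b.+1)
      leibniz_term p1 p2 I J a b j t i s a1 b1))).
Proof. by []. Qed.

Lemma leibniz_term_eq0 (p1 p2 : Op K) I J a b j t i s a1 b1 :
  (p1 i j a1 b1 <> 0 ->
   p2 (I - (i - s))%N (J - j + t%:Z) (a - a1 + s)%N (b - b1 + t)%N <> 0 -> False) ->
  leibniz_term p1 p2 I J a b j t i s a1 b1 = 0.
Proof.
move=> nz; rewrite /leibniz_term /dpart.
case: (eqVneq (p1 i j a1 b1) 0) => [->|n1]; first by rewrite !mul0r.
case: (eqVneq (p2 (I - (i - s))%N (J - j + t%:Z) (a - a1 + s)%N (b - b1 + t)%N) 0)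
  => [->|n2]; first by rewrite !(mul0r, mulr0).
by case: nz; apply/eqP.
Qed.

Lemma leibniz_term00 (p1 p2 : Op K) I J a b j i a1 b1 :
  leibniz_term p1 p2 I J a b j 0 i 0 a1 b1 =
  p1 i j a1 b1 * p2 (I - i)%N (J - j) (a - a1)%N (b - b1)%N.
Proof.
rewrite /leibniz_term /dpart bin0 /gbin big_ord0 fact0 divr1 !addn0 !ffactn0.
by rewrite subn0 addr0 !mulr1.
Qed.

Lemma opmul_support (p1 p2 : Op K) I J a b :
  opmul p1 p2 I J a b <> 0 ->
  exists j t i s a1 b1,
    [/\ (s <= i)%N, (i - s <= I)%N, (a1 <= a)%N && (b1 <= b)%N,
        p1 i j a1 b1 <> 0 &
        p2 (I - (i - s))%N (J - j + t%:Z) (a - a1 + s)%N (b - b1 + t)%N <> 0].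
Proof.
move=> nz; apply: NNPP => none; apply: nz; rewrite opmulE.
apply: fsumZ_eq0 => j; apply: fsum_eq0 => t; apply: fsum_eq0 => i.
apply: big1 => s hs; apply: big1 => a1 _; apply: big1 => b1 _.
apply: leibniz_term_eq0 => n1 n2; apply: none; exists j, t, i, s, a1, b1.
have := ltn_ord s; have := ltn_ord a1; have := ltn_ord b1; rewrite !ltnS => *.
by split=> //; apply/andP.
Qed.

Lemma opmul_single (p1 p2 : Op K) I J a b (j0 : int) (t0 i0 s0 : nat) :
  (s0 <= i0)%N -> (i0 - s0 <= I)%N ->
  (forall (j : int) (t i s a1 b1 : nat), (s <= i)%N -> (i - s <= I)%N ->
     p1 i j a1 b1 <> 0 ->
     p2 (I - (i - s))%N (J - j + t%:Z) (a - a1 + s)%N (b - b1 + t)%N <> 0 ->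
     [/\ j = j0, t = t0, i = i0 & s = s0]) ->
  opmul p1 p2 I J a b =
  \sum_(a1 < a.+1) \sum_(b1 < b.+1) leibniz_term p1 p2 I J a b j0 t0 i0 s0 a1 b1.
Proof.
move=> les0 leI only.
have vanish j t i (s : 'I_i.+1) : (i - s <= I)%N ->
    ~ [/\ j = j0, t = t0, i = i0 & val s = s0] ->
    \sum_(a1 < a.+1) \sum_(b1 < b.+1) leibniz_term p1 p2 I J a b j t i s a1 b1 = 0.
  move=> hs other; apply: big1 => a1 _; apply: big1 => b1 _.
  apply: leibniz_term_eq0 => n1 n2; apply: other.
  by apply: (only j t i s a1 b1 _ hs n1 n2); exact: ltn_ord s.
rewrite opmulE (fsumZ_single (z0 := j0)) => [|j ne]; last first.
  apply: fsum_eq0 => t; apply: fsum_eq0 => i; apply: big1 => s hs.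
  by apply: vanish => // -[].
rewrite (fsum_single (n0 := t0)) => [|t ne]; last first.
  apply: fsum_eq0 => i; apply: big1 => s hs; by apply: vanish => // -[].
rewrite (fsum_single (n0 := i0)) => [|i ne]; last first.
  by apply: big1 => s hs; apply: vanish => // -[].
have lts0 : (s0 < i0.+1)%N by [].
rewrite (bigD1 (Ordinal lts0)) //= [X in _ + X]big1 ?addr0 // => s /andP[hs ne].
apply: vanish => // -[_ _ _ es]; move: ne; rewrite -(inj_eq val_inj) /= es.
by rewrite eqxx.
Qed.
End LeibnizProduct.

Section PowerSeries.
Variable K : fieldType.

Definition psmul (c d : PS K) : PS K :=
  fun a b => \sum_(a1 < a.+1) \sum_(b1 < b.+1) c a1 b1 * d (a - a1)%N (b - b1)%N.

Definition lex_least (c : PS K) (a0 b0 : nat) : Prop :=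
  c a0 b0 <> 0 /\
  forall a b, (a < a0)%N \/ (a = a0 /\ (b < b0)%N) -> c a b = 0.

Lemma lex_least_exists (c : PS K) : ~ zeroPS c -> exists a0 b0, lex_least c a0 b0.
Proof.
move=> nz.
have [a0 [[b' nzb'] rows_below]] : exists a0, (exists b, c a0 b <> 0) /\
    forall a, (a < a0)%N -> ~ exists b, c a b <> 0.
  apply: ex_minimal; apply: NNPP => none; apply: nz => a b.
  by apply: NNPP => nzab; apply: none; exists a, b.
have [b0 [nzb0 left_of]] := ex_minimal (ex_intro (fun b => c a0 b <> 0) b' nzb').
exists a0, b0; split => // a b [lta|[-> ltb]].
  by apply: NNPP => nzab; apply: (rows_below a lta); exists b.
by apply: NNPP; apply: left_of.
Qed.

Lemma psmul_lex_least (c d : PS K) a0 b0 e0 f0 :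
  lex_least c a0 b0 -> lex_least d e0 f0 ->
  psmul c d (a0 + e0)%N (b0 + f0)%N = c a0 b0 * d e0 f0.
Proof.
move=> [_ c0] [_ d0].
have vanish (a1 b1 : nat) : (a1 <= a0 + e0)%N -> (b1 <= b0 + f0)%N ->
    (a1 <> a0 \/ b1 <> b0) ->
    c a1 b1 * d (a0 + e0 - a1)%N (b0 + f0 - b1)%N = 0.
  move=> lea leb ne; case: (ltngtP a1 a0) => [lta|gta|ea].
  - by rewrite c0 ?mul0r //; left.
  - by rewrite d0 ?mulr0 //; left; lia.
  case: (ltngtP b1 b0) => [ltb|gtb|eb]; last by case: ne.
  - by rewrite c0 ?mul0r //; right.
  - by rewrite d0 ?mulr0 //; right; split; lia.
have lta : (a0 < (a0 + e0).+1)%N by lia.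
have ltb : (b0 < (b0 + f0).+1)%N by lia.
rewrite /psmul (bigD1 (Ordinal lta)) //= [X in _ + X]big1 ?addr0 => [|a1 ne]; last first.
  apply: big1 => b1 _; apply: vanish; [exact: ltn_ord a1 | exact: ltn_ord b1 |].
  left => ea.
  by move: ne; rewrite -(inj_eq val_inj) /= ea eqxx.
rewrite (bigD1 (Ordinal ltb)) //= [X in _ + X]big1 ?addr0 => [|b1 ne]; last first.
  apply: vanish; [exact: leq_addr | exact: ltn_ord b1 | right => eb].
  by move: ne; rewrite -(inj_eq val_inj) /= eb eqxx.
by rewrite !addKn.
Qed.

Lemma psmul_neq0 (c d : PS K) : ~ zeroPS c -> ~ zeroPS d -> ~ zeroPS (psmul c d).
Proof.
move=> /lex_least_exists [a0 [b0 lc]] /lex_least_exists [e0 [f0 ld]] z.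
move: (z (a0 + e0)%N (b0 + f0)%N); rewrite (psmul_lex_least lc ld).
by apply/eqP; rewrite mulf_neq0 //; apply/eqP; [exact: lc.1 | exact: ld.1].
Qed.
End PowerSeries.

Section GammaOrder.
Variable K : fieldType.

Lemma ordG_support (p : Op K) k l i j x y :
  ordG p k l -> p i j x y <> 0 -> j <= l /\ (j = l -> (i <= k)%N).
Proof.
move=> [above [right_of _]] nz; split.
  by case: (leP j l) => // /above /(_ x y).
by move=> ej; case: (leqP i k) => // /right_of; rewrite -ej => /(_ x y).
Qed.

Lemma ordG_term_index (p1 p2 : Op K) k1 k2 l1 l2 I J (j : int) (t i s a1 b1 x y : nat) :
  ordG p1 k1 l1 -> ordG p2 k2 l2 -> (s <= i)%N -> (i - s <= I)%N ->
  p1 i j a1 b1 <> 0 -> p2 (I - (i - s))%N (J - j + t%:Z) x y <> 0 ->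
  J <= l1 + l2 /\
  (J = l1 + l2 -> (I <= k1 + k2)%N /\
                  (I = k1 + k2 -> [/\ j = l1, t = 0%N, i = k1 & s = 0%N])).
Proof.
move=> O1 O2 les leI /(ordG_support O1) [lej lek] /(ordG_support O2) [leJ leI2].
split; first lia.
move=> eJ; have ej : j = l1 by lia.
have et : t = 0%N by lia.
have lei := lek ej; have := leI2 ltac:(lia).
by split; [lia | split; lia].
Qed.

Lemma opmul_lead (p1 p2 : Op K) k1 k2 l1 l2 a b :
  ordG p1 k1 l1 -> ordG p2 k2 l2 ->
  opmul p1 p2 (k1 + k2)%N (l1 + l2) a b = psmul (p1 k1 l1) (p2 k2 l2) a b.
Proof.
move=> O1 O2; rewrite (opmul_single (j0 := l1) (t0 := 0) (i0 := k1) (s0 := 0)) //.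
- apply: eq_bigr => a1 _; apply: eq_bigr => b1 _; rewrite leibniz_term00.
  by congr (_ * p2 _ _ _ _); lia.
- by rewrite subn0 leq_addr.
move=> j t i s a1 b1 les leI n1 n2.
by have [_ /(_ erefl) [_ /(_ erefl)]] := ordG_term_index O1 O2 les leI n1 n2.
Qed.

Lemma ordG_mul (p1 p2 : Op K) k1 k2 l1 l2 :
  ordG p1 k1 l1 -> ordG p2 k2 l2 -> ordG (opmul p1 p2) (k1 + k2)%N (l1 + l2).
Proof.
move=> O1 O2; split; [|split].
- move=> I J ltJ a b; apply: NNPP.
  move=> /opmul_support [j [t [i [s [a1 [b1 [les leI _ n1 n2]]]]]]].
  by have [] := ordG_term_index O1 O2 les leI n1 n2; lia.
- move=> I ltI a b; apply: NNPP.
  move=> /opmul_support [j [t [i [s [a1 [b1 [les leI _ n1 n2]]]]]]].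
  by have [_ /(_ erefl) []] := ordG_term_index O1 O2 les leI n1 n2; lia.
- move=> z; apply: (psmul_neq0 O1.2.2 O2.2.2) => a b.
  by rewrite -opmul_lead //; apply: z.
Qed.
End GammaOrder.

Lemma intR_Z (z : int) : intR z = IZR (Z_of_int z).
Proof.
case: z => n /=; first by rewrite INR_IZR_INZ.
by rewrite opp_IZR -INR_IZR_INZ addn1.
Qed.

Lemma intR_add (x y : int) : intR (x + y) = Rplus (intR x) (intR y).
Proof. by rewrite !intR_Z -plus_IZR; congr IZR; lia. Qed.

Section LeibnizBound.
Local Open Scope R_scope.
(* The inequality behind the conditions: the bounds for the two factors of a
   Leibniz term add up to the bound for the product, the shift t of the
   d2-exponent being absorbed since alpha >= 1. *)
Lemma leibniz_bound (al I i I2 s t k1 k2 e1 e2 E c1 c2 c : R) :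
  1 <= al -> 0 <= s -> 0 <= t ->
  I + s = i + I2 -> e1 + e2 + t = E -> c1 + c2 <= c + s + t ->
  i <= al * e1 + k1 + c1 -> I2 <= al * e2 + k2 + c2 ->
  I <= al * E + (k1 + k2) + c.
Proof. by move=> *; nra. Qed.
End LeibnizBound.

Section SupportBound.
Variable K : fieldType.
Variables (al : R) (wt : nat -> R).

Definition support_bound (p : Op K) (k : nat) (l : int) : Prop :=
  forall i j a b, p i j a b <> 0 ->
    Rle (INR i) (Rplus (Rplus (Rmult al (intR (l - j))) (INR k)) (wt (a + b)%N)).

Hypothesis al_ge1 : Rle R1 al.

(* The weight may lose at most the m derivatives taken in a Leibniz term. *)
Hypothesis wt_slack : forall d1 d2 D m, (d1 + d2 = D + m)%N ->
  Rle (Rplus (wt d1) (wt d2)) (Rplus (wt D) (INR m)).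

Lemma support_bound_mul (p1 p2 : Op K) k1 k2 l1 l2 :
  support_bound p1 k1 l1 -> support_bound p2 k2 l2 ->
  support_bound (opmul p1 p2) (k1 + k2)%N (l1 + l2).
Proof.
move=> S1 S2 I J a b /opmul_support [j [t [i [s [a1 [b1 [les leI /andP[lea leb] n1 n2]]]]]]].
rewrite plus_INR; apply: (leibniz_bound al_ge1 (pos_INR s) (pos_INR t) _ _ _
  (S1 _ _ _ _ n1) (S2 _ _ _ _ n2)).
- by rewrite -!plus_INR; congr INR; lia.
- by rewrite -[INR t]/(intR t) -!intR_add; congr intR; lia.
- by rewrite Rplus_assoc -plus_INR; apply: wt_slack; lia.
Qed.
End SupportBound.

Lemma INR_slack d1 d2 D m : (d1 + d2 = D + m)%N ->
  Rle (Rplus (INR d1) (INR d2)) (Rplus (INR D) (INR m)).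
Proof. by move=> e; rewrite -!plus_INR !plusE e; apply: Rle_refl. Qed.

Lemma zero_slack (d1 d2 D m : nat) : (d1 + d2 = D + m)%N ->
  Rle (Rplus R0 R0) (Rplus R0 (INR m)).
Proof. by move=> _; have := pos_INR m; lra. Qed.

Section Conditions.
Variable K : fieldType.

Lemma condA_support al (p : Op K) k l : condA al p k l <-> support_bound al INR p k l.
Proof.
split=> [A i j a b nz|S i j lti a b ltab]; last first.
  by apply: NNPP => /S; lra.
have := pos_INR (a + b).
case: (Rle_or_lt (INR i) (Rplus (Rmult al (intR (l - j))) (INR k))) => lei; first lra.
case: (Rle_or_lt (Rminus (Rminus (INR i) (Rmult al (intR (l - j)))) (INR k))
                 (INR (a + b))) => led; first lra.
by case: nz; apply: A.
Qed.

Lemma condB_support al (p : Op K) k l :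
  condB al p k l <-> support_bound al (fun _ => R0) p k l.
Proof.
split=> [B i j a b nz|S i j lti a b]; last first.
  by apply: NNPP => /S; lra.
case: (Rle_or_lt (INR i) (Rplus (Rmult al (intR (l - j))) (INR k))) => lei; first lra.
by case: nz; apply: B.
Qed.
End Conditions.

Theorem lemma9 (K : fieldType) (charK0 : [pchar K] =i pred0)
  (al : R) (hal : Rle R1 al) :
  (forall (P1 P2 : Op K) (k1 k2 : nat) (l1 l2 : int),
      inEhat P1 -> inEhat P2 ->
      condA al P1 k1 l1 -> condA al P2 k2 l2 ->
      condA al (opmul P1 P2) (k1 + k2)%N (l1 + l2)) /\
  (forall (P1 P2 : Op K) (k1 k2 : nat) (l1 l2 : int),
      inEhat P1 -> inEhat P2 ->
      ordG P1 k1 l1 -> condA al P1 k1 l1 ->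
      ordG P2 k2 l2 -> condA al P2 k2 l2 ->
      ordG (opmul P1 P2) (k1 + k2)%N (l1 + l2) /\
      condA al (opmul P1 P2) (k1 + k2)%N (l1 + l2)) /\
  (forall (P1 P2 : Op K) (k1 k2 : nat) (l1 l2 : int),
      inEplus P1 -> inEplus P2 ->
      condB al P1 k1 l1 -> condB al P2 k2 l2 ->
      condB al (opmul P1 P2) (k1 + k2)%N (l1 + l2)) /\
  (forall (P1 P2 : Op K) (k1 k2 : nat) (l1 l2 : int),
      inEplus P1 -> inEplus P2 ->
      ordG P1 k1 l1 -> condB al P1 k1 l1 ->
      ordG P2 k2 l2 -> condB al P2 k2 l2 ->
      ordG (opmul P1 P2) (k1 + k2)%N (l1 + l2) /\
      condB al (opmul P1 P2) (k1 + k2)%N (l1 + l2)).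
Proof.
have mulA (P1 P2 : Op K) k1 k2 l1 l2 : condA al P1 k1 l1 -> condA al P2 k2 l2 ->
    condA al (opmul P1 P2) (k1 + k2)%N (l1 + l2).
  by rewrite !condA_support => S1 S2; exact: (support_bound_mul hal INR_slack S1 S2).
have mulB (P1 P2 : Op K) k1 k2 l1 l2 : condB al P1 k1 l1 -> condB al P2 k2 l2 ->
    condB al (opmul P1 P2) (k1 + k2)%N (l1 + l2).
  by rewrite !condB_support => S1 S2; exact: (support_bound_mul hal zero_slack S1 S2).
split; first by move=> *; apply: mulA.
split; first by move=> *; split; [apply: ordG_mul | apply: mulA].
split; first by move=> *; apply: mulB.
by move=> *; split; [apply: ordG_mul | apply: mulB].
Qed.
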